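(* Let $G=K\rtimes_\phi H$ be a finite Frobenius group with kernel $K$ and complement $H$, where $\phi:H\to\mathrm{Aut}(K)$ is the action, $H$ is identified with a subgroup of $G$, and $\pi:G\to H$ is the quotient map with kernel $K$. Let $\sigma\in\mathrm{Aut}(K)$ and $\gamma\in\mathrm{Aut}(H)$. Then there exists $\alpha\in\mathrm{Aut}(G)$ with $\alpha|_K=\sigma$ and $\pi\circ\alpha|_H=\gamma$ if and only if for every $h\in H$ the automorphism $\sigma\circ\phi(h)\circ\sigma^{-1}\circ\phi(\gamma(h))^{-1}$ of $K$ lies in $\mathrm{Inn}(K)$.
   Context: A finite group $G=K\rtimes_\phi H$ with $K,H$ nontrivial is a Frobenius group with kernel $K$ and complement $H$ if for every $h\in H$, $h\neq1$, the automorphism $\phi(h)$ fixes no nonidentity element of $K$. $\mathrm{Inn}(K)$ denotes the group of inner automorphisms of $K$. *)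

From HB Require Import structures.
From mathcomp Require Import all_boot all_fingroup.
Set Implicit Arguments. Unset Strict Implicit. Unset Printing Implicit Defensive.
Local Open Scope group_scope.

(* Internal view of G = K ><|_phi H : the action phi(h) is k |-> h k h^-1. *)
Definition phi_act (gT : finGroupType) (h : gT) : gT -> gT := fun k => h * k * h^-1.
Definition phi_act_inv (gT : finGroupType) (h : gT) : gT -> gT := fun k => h^-1 * k * h.

Definition frobenius_sdprod (gT : finGroupType) (G K H : {group gT}) : Prop :=
  [/\ K ><| H = G, K :!=: 1, H :!=: 1 &
      forall h, h \in H -> h != 1 ->
        forall k, k \in K -> phi_act h k = k -> k = 1].

(* The quotient map pi : G -> H with kernel K (g = k * pi g, k in K). *)
Definition pi_map (gT : finGroupType) (K H : {set gT}) (g : gT) : gT := remgr K H g.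

Definition is_inner_on (gT : finGroupType) (K : {set gT}) (f : gT -> gT) : Prop :=
  exists2 x, x \in K & forall k, k \in K -> f k = x * k * x^-1.

From HB Require Import structures.
From mathcomp Require Import all_boot all_fingroup all_solvable.
Set Implicit Arguments. Unset Strict Implicit. Unset Printing Implicit Defensive.
Local Open Scope group_scope.

(* If alpha exists, write alpha h = x_h * gamma h with x_h in K; the automorphism
   sigma phi(h) sigma^-1 phi(gamma h)^-1 is then conjugation by x_h.
   Conversely, call g in G a lift if conjugation by g on K is transported by
   sigma from conjugation by h := gamma^-1 (pi g).  Lifts form a subgroup M,
   and the inner-ness hypothesis says that every coset of K contains a lift,
   i.e. M K = G.  Kernel and complement of a Frobenius group have coprime
   orders, so by Schur-Zassenhaus M :&: K has a complement B in M, which is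
   also a complement of K in G.  Then alpha is sigma on K and maps h to the
   B-component of gamma h. *)

Lemma frobenius_sdprod_coprime (gT : finGroupType) (G K H : {group gT}) :
  frobenius_sdprod G K H -> coprime #|K| #|H|.
Proof.
case=> defG _ _ frobH; have [_ _ nKH _] := sdprodP defG.
apply: regular_norm_coprime nKH _ => x; rewrite !inE => /andP[ntx Hx].
apply/trivgP/subsetP => k /setIP[Kk /cent1P ckx]; rewrite inE.
by apply/eqP/(frobH x Hx ntx k Kk); rewrite /phi_act -ckx mulgK.
Qed.

Lemma coprime_supplement_complement (gT : finGroupType) (G K M : {group gT}) :
  K <| G -> M * K = G -> coprime #|K| #|G : K| ->
  exists2 B : {group gT}, B \in [complements to K in G] & B \subset M.
Proof.
move=> nsKG defMK coKG; have [sKG nKG] := andP nsKG.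
have sMG : M \subset G by rewrite -defMK mulG_subl.
have nsNM : M :&: K <| M := normalGI sMG nsKG.
have hallN : Hall M (M :&: K).
  rewrite /Hall subsetIl indexgI -indexMg -(normC (subset_trans sMG nKG)) defMK.
  exact: coprime_dvdl (cardSg (subsetIr M K)) coKG.
have [B /complP[tiNB defNB]] := splitsP (SchurZassenhaus_split hallN nsNM).
have sBM : B \subset M by rewrite -defNB mulG_subr.
exists B => //; apply/complP; split.
  by rewrite -(setIidPr sBM) setIA [K :&: M]setIC.
by rewrite -defMK (normC (subset_trans sMG nKG)) -defNB mulgA (mulGSid (subsetIr M K)).
Qed.

Definition intertwines (gT : finGroupType) (K : {set gT}) (sigma : gT -> gT) (h g : gT) :=
  [forall k in K, sigma (k ^ h) == sigma k ^ g].

Lemma intertwinesP (gT : finGroupType) (K : {set gT}) (sigma : gT -> gT) (h g : gT) :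
  reflect (forall k, k \in K -> sigma (k ^ h) = sigma k ^ g) (intertwines K sigma h g).
Proof. by apply: (iffP forall_inP) => E k /E /eqP. Qed.

Section SemidirectAutomorphisms.

Variables (gT : finGroupType) (G K H : {group gT}) (sigma gamma : {perm gT}).
Hypotheses (defG : K ><| H = G) (AutS : sigma \in Aut K) (AutG : gamma \in Aut H).

Local Notation pi := (pi_map K H).

Let complH : H \in [complements to K in G].
Proof. by have [_ eKH _ tiKH] := sdprodP defG; apply/complP. Qed.
Let nsKG : K <| G. Proof. by case/sdprod_context: defG. Qed.
Let sKG : K \subset G. Proof. exact: normal_sub nsKG. Qed.
Let sHG : H \subset G. Proof. by case/sdprod_context: defG. Qed.
Let nKH : H \subset 'N(K). Proof. by case/sdprod_context: defG. Qed.

Lemma pi_mapM : {in G &, {morph pi : x y / x * y}}.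
Proof. exact: remgrM complH nsKG. Qed.

Canonical pi_map_morphism := Morphism pi_mapM.

Lemma pi_map_mem g : g \in G -> pi g \in H.
Proof. by have /complP[_ <-] := complH; apply: mem_remgr. Qed.

Lemma pi_map_eq1 g : g \in G -> (pi g == 1) = (g \in K).
Proof.
have /complP[_ eKH] := complH; move=> Gg; apply/eqP/idP => [pi1 | Kg].
  by rewrite (divgr_eq K H g) -[remgr K H g]/(pi g) pi1 mulg1 mem_divgr ?eKH.
exact: remgr1.
Qed.

Lemma pi_map_mulKl k g : k \in K -> pi (k * g) = pi g.
Proof. exact: remgrMl. Qed.

Lemma pi_map_gamma h : h \in H -> pi (gamma h) = gamma h.
Proof.
by move=> Hh; rewrite /pi_map remgr_id ?(Aut_closed AutG Hh) //; case/sdprodP: defG.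
Qed.

Definition twist_aut h k := sigma (phi_act h ((sigma^-1)%g (phi_act_inv (gamma h) k))).

Lemma twist_autE h k : twist_aut h k = sigma ((sigma^-1)%g (k ^ gamma h) ^ h^-1).
Proof. by rewrite /twist_aut /phi_act /phi_act_inv !conjgE invgK !mulgA. Qed.

Definition sigma_lifts := [set g in G | intertwines K sigma ((gamma^-1)%g (pi g)) g].

Lemma mem_sigma_lifts g h : g \in G -> h \in H -> pi g = gamma h ->
  (g \in sigma_lifts) = intertwines K sigma h g.
Proof. by move=> Gg Hh pig; rewrite inE Gg pig permK. Qed.

Let gammaM : {in H &, {morph gamma : x y / x * y}}.
Proof. exact/morphicP/Aut_morphic. Qed.

Let gammaV_pi_map g : g \in G -> (gamma^-1)%g (pi g) \in H.
Proof. by move/pi_map_mem; apply: Aut_closed; rewrite groupV. Qed.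

Lemma sigma_liftsP g : g \in sigma_lifts ->
  [/\ g \in G, (gamma^-1)%g (pi g) \in H & intertwines K sigma ((gamma^-1)%g (pi g)) g].
Proof. by case/setIdP=> Gg tw; split=> //; apply: gammaV_pi_map. Qed.

Lemma sigma_lifts_group_set : group_set sigma_lifts.
Proof.
apply/group_setP; split.
  have gamma1 : gamma 1 = 1 by rewrite -(autmE AutG) morph1.
  rewrite (@mem_sigma_lifts 1 1) ?morph1 ?gamma1 //.
  by apply/intertwinesP => k _; rewrite !conjg1.
move=> g1 g2 /sigma_liftsP[G1 H1 /intertwinesP tw1] /sigma_liftsP[G2 H2 /intertwinesP tw2].
rewrite (mem_sigma_lifts (groupM G1 G2) (groupM H1 H2)); last first.
  by rewrite pi_mapM // gammaM // !permKV.
apply/intertwinesP => k Kk.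
by rewrite conjgM tw2 ?memJ_norm ?(subsetP nKH) // tw1 // conjgM.
Qed.

Canonical sigma_lifts_group := Group sigma_lifts_group_set.

Lemma sigma_lift_of_inner_twist h : h \in H -> is_inner_on K (twist_aut h) ->
  exists2 m, m \in sigma_lifts & pi m = gamma h.
Proof.
move=> Hh [x Kx tw_x]; have Hgh : gamma h \in H := Aut_closed AutG Hh.
have Gm : x * gamma h \in G by rewrite groupM ?(subsetP sKG x) ?(subsetP sHG _ Hgh).
have pim : pi (x * gamma h) = gamma h by rewrite pi_map_mulKl ?pi_map_gamma.
exists (x * gamma h) => //; rewrite (mem_sigma_lifts Gm Hh pim).
apply/intertwinesP => k Kk.
have Kkh : k ^ h \in K by rewrite memJ_norm ?(subsetP nKH).
(* twist_aut h sends this point to sigma k. *)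
have Kk0 : sigma (k ^ h) ^ (gamma h)^-1 \in K.
  by rewrite memJ_norm ?(Aut_closed AutS) // groupV (subsetP nKH).
have := tw_x _ Kk0; rewrite twist_autE conjgKV permK conjgK => ->.
by rewrite (conjgCV x) mulgK -!conjgM mulKg mulVg conjg1.
Qed.

Lemma sigma_lifts_mulK :
  (forall h, h \in H -> is_inner_on K (twist_aut h)) -> sigma_lifts * K = G.
Proof.
move=> inner; apply/eqP; rewrite eqEsubset mul_subG //=; last first.
  by apply/subsetP => g /setIdP[].
apply/subsetP => g Gg; have Hh := gammaV_pi_map Gg.
have [m Lm] := sigma_lift_of_inner_twist Hh (inner _ Hh); rewrite permKV => pim.
have Gm : m \in G by case/setIdP: Lm.
rewrite -(mulKVg m g) mem_mulg // -pi_map_eq1 ?groupM ?groupV //.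
by rewrite morphM ?groupV // morphV //= pim mulVg.
Qed.

Lemma inner_twist_of_extension (alpha : {perm gT}) : alpha \in Aut G ->
    (forall k, k \in K -> alpha k = sigma k) ->
    (forall h, h \in H -> pi (alpha h) = gamma h) ->
  forall h, h \in H -> is_inner_on K (twist_aut h).
Proof.
move=> AutA aK aH h Hh; have /complP[_ eKH] := complH.
have Gh : h \in G by apply: (subsetP sHG).
have Gah : alpha h \in G by apply: Aut_closed.
set x := divgr K H (alpha h).
have ah : alpha h = x * gamma h by rewrite -aH // -divgr_eq.
exists x; first by rewrite mem_divgr ?eKH.
move=> k Kk; rewrite twist_autE.
have Kk' : (sigma^-1)%g (k ^ gamma h) \in K.
  by rewrite (Aut_closed (groupVr AutS)) // memJ_norm ?(subsetP nKH) ?(Aut_closed AutG).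
rewrite -aK ?memJ_norm ?groupV ?(subsetP nKH) //.
rewrite -(autmE AutA) morphJ ?groupV ?(subsetP sKG _ Kk') //.
rewrite morphV //= !autmE aK // permKV ah.
by rewrite -conjgM invMg mulgA mulgV mul1g conjgE invgK mulgA.
Qed.

Lemma extension_of_complement (B : {group gT}) :
    B \in [complements to K in G] -> B \subset sigma_lifts ->
  exists2 alpha : {perm gT}, alpha \in Aut G &
    (forall k, k \in K -> alpha k = sigma k) /\
    (forall h, h \in H -> pi (alpha h) = gamma h).
Proof.
move=> complB sBL; have /complP[tiKB eKB] := complB.
have sBG : B \subset G by rewrite -eKB mulG_subr.
have GH h : h \in H -> gamma h \in G by move/(Aut_closed AutG)/(subsetP sHG).
pose fB h := remgr K B (gamma h).
have fBM : {in H &, {morph fB : x y / x * y}}.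
  by move=> h1 h2 H1 H2; rewrite /fB gammaM // (remgrM complB nsKG) ?GH.
have fB_B h : h \in H -> fB h \in B by move/GH; rewrite -eKB; apply: mem_remgr.
have pi_fB h : h \in H -> pi (fB h) = gamma h.
  move=> Hh; rewrite /fB -[RHS](pi_map_gamma Hh) [in RHS](divgr_eq K B (gamma h)).
  by rewrite pi_map_mulKl // mem_divgr ?eKB ?GH.
have actB : {in K & H, morph_act 'J 'J (autm AutS) (Morphism fBM)}.
  move=> k h Kk Hh /=; rewrite !autmE.
  have Gf : fB h \in G := subsetP sBG _ (fB_B h Hh).
  have := subsetP sBL _ (fB_B h Hh).
  by rewrite (mem_sigma_lifts Gf Hh (pi_fB h Hh)) => /intertwinesP; apply.
pose alpha := sdprodm defG actB.
have injA : 'injm alpha.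
  rewrite injm_sdprodm injm_autm im_autm /=; apply/andP; split.
    apply/injmP => h1 h2 H1 H2 /= /(congr1 pi); rewrite !pi_fB //.
    exact: perm_inj.
  rewrite -subG1 -tiKB setIS //; apply/subsetP => _ /morphimP[h _ Hh ->].
  exact: fB_B.
have imA : alpha @* G = G.
  apply/eqP; rewrite eqEcard card_injm // leqnn andbT im_sdprodm im_autm.
  rewrite -eKB mulgS //; apply/subsetP => _ /morphimP[h _ Hh ->].
  exact: fB_B.
exists (aut injA imA); first exact: Aut_aut.
split=> [k Kk | h Hh]; rewrite autE ?(subsetP sKG k) ?(subsetP sHG h) //=.
  by rewrite sdprodmEl //= autmE.
by rewrite sdprodmEr //= pi_fB.
Qed.

End SemidirectAutomorphisms.

Theorem theorem3p3 (gT : finGroupType) (G K H : {group gT})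
  (sigma gamma : {perm gT}) :
  frobenius_sdprod G K H ->
  sigma \in Aut K -> gamma \in Aut H ->
  (exists2 alpha : {perm gT}, alpha \in Aut G &
     (forall k, k \in K -> alpha k = sigma k) /\
     (forall h, h \in H -> pi_map K H (alpha h) = gamma h))
  <->
  (forall h, h \in H ->
     is_inner_on K (fun k => sigma (phi_act h ((sigma^-1)%g (phi_act_inv (gamma h) k))))).
Proof.
move=> frobG AutS AutG; have [defG _ _ _] := frobG.
split=> [[alpha AutA [aK aH]] h Hh | inner].
  exact: (inner_twist_of_extension defG AutS AutG AutA aK aH Hh).
have nsKG : K <| G by case/sdprod_context: defG.
have coKG : coprime #|K| #|G : K|.
  by rewrite -(index_sdprod defG) (frobenius_sdprod_coprime frobG).
have [B complB sBL] := coprime_supplement_complement nsKG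
  (sigma_lifts_mulK defG AutS AutG inner) coKG.
exact: extension_of_complement complB sBL.
Qed.
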